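(* Let $A,B,C$ be subspaces. If $A\perp^{*}B$ and $A\cap B\subsetneq C\subset B$, then $A\perp^{*}C$.
   Context: Let $V$ be a vector space over a field with a nondegenerate symmetric bilinear form $\xi$ having no isotropic vectors. (Affine) subspaces are sets $p+W$ with $W$ a linear subspace. $X_1\sqcup X_2$ denotes the least subspace containing $X_1\cup X_2$. For nonempty subspaces $X,Y$: $X\perp Y$ iff $\xi(b-a,d-c)=0$ for all $a,b\in X$, $c,d\in Y$; $X\perp_x Y$ iff $X\perp Y$ and $X\cap Y\neq\emptyset$. $X_1\perp^{\circ}X_2$ iff there are a point $q\in X_1\cap X_2$ and subspaces $Z_1,Z_2$ with $q\in Z_1,Z_2$, $Z_i\perp_x X_1\cap X_2$, $Z_1\perp_x Z_2$, and $(X_1\cap X_2)\sqcup Z_i=X_i$ for $i=1,2$. $X_1\perp^{*}X_2$ iff $X_1\perp^{\circ}X_2$ and $X_1\cap X_2$ is different from both $X_1$ and $X_2$. *)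

From mathcomp Require Import all_boot all_algebra.
Set Implicit Arguments. Unset Strict Implicit. Unset Printing Implicit Defensive.
Import GRing.Theory.
Local Open Scope ring_scope.

Section AffineOrtho.
Variables (K : fieldType) (V : lmodType K) (xi : V -> V -> K).

Definition anisotropic_sym_bilinear : Prop :=
  [/\ (forall a u v w, xi (a *: u + v) w = a * xi u w + xi v w),
      (forall u v, xi u v = xi v u),
      (forall u, (forall v, xi u v = 0) -> u = 0)
    & (forall v, xi v v = 0 -> v = 0)].

Definition lin_subspace (W : V -> Prop) : Prop :=
  [/\ W 0, (forall u v, W u -> W v -> W (u + v))
    & (forall (a : K) u, W u -> W (a *: u))].

(* affine subspace p + W (in particular nonempty) *)
Definition aff_subspace (X : V -> Prop) : Prop :=
  exists p W, lin_subspace W /\ forall x, X x <-> W (x - p).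

Definition set_eq (X Y : V -> Prop) : Prop := forall x, X x <-> Y x.
Definition psubset (X Y : V -> Prop) : Prop := forall x, X x -> Y x.
Definition psetI (X Y : V -> Prop) : V -> Prop := fun x => X x /\ Y x.

Definition join (X1 X2 : V -> Prop) : V -> Prop :=
  fun x => forall Y, aff_subspace Y -> psubset X1 Y -> psubset X2 Y -> Y x.

Definition perp (X Y : V -> Prop) : Prop :=
  forall a b c d, X a -> X b -> Y c -> Y d -> xi (b - a) (d - c) = 0.

Definition perp_x (X Y : V -> Prop) : Prop :=
  perp X Y /\ exists x, X x /\ Y x.

Definition perp_circ (X1 X2 : V -> Prop) : Prop :=
  exists q Z1 Z2,
    [/\ X1 q /\ X2 q, aff_subspace Z1 /\ aff_subspace Z2, Z1 q /\ Z2 q,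
        (perp_x Z1 (psetI X1 X2) /\ perp_x Z2 (psetI X1 X2)) /\ perp_x Z1 Z2
      & set_eq (join (psetI X1 X2) Z1) X1 /\ set_eq (join (psetI X1 X2) Z2) X2].

Definition perp_star (X1 X2 : V -> Prop) : Prop :=
  [/\ perp_circ X1 X2, ~ set_eq (psetI X1 X2) X1 & ~ set_eq (psetI X1 X2) X2].

End AffineOrtho.

From mathcomp Require Import all_boot all_algebra.
From Stdlib Require Import Setoid.

Set Implicit Arguments. Unset Strict Implicit. Unset Printing Implicit Defensive.
Import GRing.Theory.
Local Open Scope ring_scope.

(* The same point q and the same Z1 witness A ⊥° C, with C ∩ Z2 in place of
   Z2: since A ∩ C = A ∩ B, all orthogonality conditions are inherited from
   the larger sets, and C = (A ∩ B) ⊔ (C ∩ Z2) is the modular law for the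
   flats A ∩ B ⊆ C ⊆ (A ∩ B) ⊔ Z2 through q. *)

Section AffineFlats.
Variables (K : fieldType) (V : lmodType K).

Lemma lin_subspaceD (W : V -> Prop) u v :
  lin_subspace W -> W u -> W v -> W (u + v).
Proof. by case=> _ hD _; apply: hD. Qed.

Lemma lin_subspaceN (W : V -> Prop) u : lin_subspace W -> W u -> W (- u).
Proof. by case=> _ _ hZ hu; rewrite -scaleN1r; apply: hZ. Qed.

Lemma lin_subspaceB (W : V -> Prop) u v :
  lin_subspace W -> W u -> W v -> W (u - v).
Proof. by move=> hW hu hv; apply: lin_subspaceD => //; apply: lin_subspaceN. Qed.

Lemma addrKl (q w : V) : q + w - q = w.
Proof. by rewrite addrC addKr. Qed.

Lemma aff_subspace_at (X : V -> Prop) q : aff_subspace X -> X q ->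
  exists W, lin_subspace W /\ forall x, X x <-> W (x - q).
Proof.
case=> p [W [hW hX]] Xq; exists W; split => // x; rewrite hX.
have Wqp : W (q - p) by rewrite -hX.
split=> h.
- have -> : x - q = (x - p) - (q - p) by rewrite opprB addrA subrK.
  exact: lin_subspaceB.
- have -> : x - p = (x - q) + (q - p) by rewrite addrA subrK.
  exact: lin_subspaceD.
Qed.

Lemma aff_subspaceI (X Y : V -> Prop) q :
  aff_subspace X -> aff_subspace Y -> X q -> Y q -> aff_subspace (psetI X Y).
Proof.
move=> aX aY Xq Yq.
have [W1 [[W10 W1D W1Z] e1]] := aff_subspace_at aX Xq.
have [W2 [[W20 W2D W2Z] e2]] := aff_subspace_at aY Yq.
exists q, (fun v => W1 v /\ W2 v); split; last by move=> x; rewrite /psetI e1 e2.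
split=> //.
  by move=> u v [? ?] [? ?]; split; [apply: W1D|apply: W2D].
by move=> a u [? ?]; split; [apply: W1Z|apply: W2Z].
Qed.

Lemma join_eq_l (X X' Z : V -> Prop) :
  set_eq X X' -> set_eq (join X Z) (join X' Z).
Proof.
by move=> e x; split=> h Y aY sX sZ; apply: h => // y /e; apply: sX.
Qed.

Lemma join_decomp (D Z : V -> Prop) q WD WZ :
  lin_subspace WD -> lin_subspace WZ ->
  (forall x, D x <-> WD (x - q)) -> (forall x, Z x <-> WZ (x - q)) ->
  forall x, join D Z x -> exists d z, [/\ WD d, WZ z & x = q + d + z].
Proof.
move=> hD hZ eD eZ x hj.
apply: (hj (fun x => exists d z, [/\ WD d, WZ z & x = q + d + z])) => [|y /eD hy|y /eZ hy].
- exists q, (fun v => exists d z, [/\ WD d, WZ z & v = d + z]); split.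
    split.
    + by exists 0, 0; rewrite addr0; split => //; [case: hD|case: hZ].
    + move=> _ _ [d [z [? ? ->]]] [d' [z' [? ? ->]]].
      exists (d + d'), (z + z'); rewrite addrACA.
      by split => //; apply: lin_subspaceD.
    + move=> a _ [d [z [? ? ->]]]; exists (a *: d), (a *: z).
      by rewrite scalerDr; split => //; [case: hD => _ _; apply|case: hZ => _ _; apply].
  move=> y; split=> [[d [z [? ? ->]]]|[d [z [? ? e]]]]; exists d, z.
    by rewrite -[q + d + z]addrA addrKl.
  by rewrite -addrA -e addrC subrK.
- exists (y - q), 0.
  by rewrite addr0 [q + _]addrC subrK; split => //; case: hZ.
- exists 0, (y - q).
  by rewrite addr0 [q + _]addrC subrK; split => //; case: hD.
Qed.

Lemma join_modular (D Z C : V -> Prop) q :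
  aff_subspace D -> aff_subspace Z -> aff_subspace C -> D q -> Z q ->
  psubset D C -> psubset C (join D Z) -> set_eq (join D (psetI C Z)) C.
Proof.
move=> aD aZ aC Dq Zq sDC sCJ x; split; first by apply => // y [].
move=> Cx.
have [WD [hWD eD]] := aff_subspace_at aD Dq.
have [WZ [hWZ eZ]] := aff_subspace_at aZ Zq.
have [WC [hWC eC]] := aff_subspace_at aC (sDC _ Dq).
have [d [z [WDd WZz ex]]] := join_decomp hWD hWZ eD eZ (sCJ _ Cx).
have Dd : D (q + d) by apply/eD; rewrite addrKl.
have WCz : WC z.
  have -> : z = (d + z) - d by rewrite addrC addKr.
  apply: lin_subspaceB => //.
    by move/eC: Cx; rewrite ex -[q + d + z]addrA addrKl.
  by move/eC: (sDC _ Dd); rewrite addrKl.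
move=> Y aY sDY sCZY.
have [WY [hWY eY]] := aff_subspace_at aY (sDY _ Dq).
apply/eY; rewrite ex -[q + d + z]addrA addrKl; apply: lin_subspaceD => //.
  by move/eY: (sDY _ Dd); rewrite addrKl.
have CZz : psetI C Z (q + z) by split; [apply/eC|apply/eZ]; rewrite addrKl.
by move/eY: (sCZY _ CZz); rewrite addrKl.
Qed.

End AffineFlats.

Section Orthogonality.
Variables (K : fieldType) (V : lmodType K) (xi : V -> V -> K).

Lemma perp_subset (X X' Y Y' : V -> Prop) :
  psubset X X' -> psubset Y Y' -> perp xi X' Y' -> perp xi X Y.
Proof. by move=> sX sY p a b c d /sX ? /sX ? /sY ? /sY ?; apply: p. Qed.

Lemma perp_x_subset (X X' Y Y' : V -> Prop) q :
  psubset X X' -> psubset Y Y' -> X q -> Y q -> perp_x xi X' Y' -> perp_x xi X Y.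
Proof.
by move=> sX sY Xq Yq [p _]; split; [apply: perp_subset p|exists q].
Qed.

End Orthogonality.

Theorem proposition3p3 (K : fieldType) (V : lmodType K) (xi : V -> V -> K)
  (hxi : anisotropic_sym_bilinear xi) (A B C : V -> Prop) :
  aff_subspace A -> aff_subspace B -> aff_subspace C ->
  perp_star xi A B ->
  psubset (psetI A B) C -> ~ psubset C (psetI A B) -> psubset C B ->
  perp_star xi A C.
Proof.
move=> aA aB aC [[q [Z1 [Z2 [[Aq Bq] [aZ1 aZ2] [Z1q Z2q] [[pZ1 pZ2] p12] [j1 j2]]]]] nAB_A _].
move=> sABC nCAB sCB.
have Cq : C q by apply: sABC.
have eACB : set_eq (psetI A C) (psetI A B).
  by move=> x; split=> -[Ax ?]; split => //; [apply: sCB|apply: sABC].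
have sACB x : psetI A C x -> psetI A B x by move/eACB.
have sCZ2 x : psetI C Z2 x -> Z2 x by case.
split.
- exists q, Z1, (psetI C Z2); split => //.
  + by split => //; apply: aff_subspaceI aC aZ2 Cq Z2q.
  + split; first split.
    * exact: perp_x_subset (fun _ => id) sACB Z1q (conj Aq Cq) pZ1.
    * exact: perp_x_subset sCZ2 sACB (conj Cq Z2q) (conj Aq Cq) pZ2.
    * exact: perp_x_subset (fun _ => id) sCZ2 Z1q (conj Cq Z2q) p12.
  + split=> x; rewrite (join_eq_l _ eACB); first exact: j1.
    have sCJ : psubset C (join (psetI A B) Z2) by move=> y /sCB /j2.
    exact: join_modular (aff_subspaceI aA aB Aq Bq) aZ2 aC (conj Aq Bq) Z2q sABC sCJ x.
- by move=> e; apply: nAB_A => x; rewrite -eACB.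
- by move=> e; apply: nCAB => x /e /sACB.
Qed.
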